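(* Let $p\ge 2$ and $d\in\{0,1,\dots,9\}$ be integers, and let $n\ge 10^{p-1}$ be an integer. Let $k=\max\{i\in\mathbb N:10^{i+p}\le n\}$, with $k=-1$ if this set is empty, and let $$l=\Big\lfloor\frac{n-(10^{p-1}+d)10^{k+1}}{10^{k+2}}\Big\rfloor+10^{p-2}.$$ Then \begin{align*} P_{(d,n,p)}=\frac{1}{n+1-10^{p-1}}\Big(&\sum_{i=0}^k\Big(\sum_{j=10^{p-2}}^{10^{p-1}-1}\ \sum_{b=(10j+d)10^i}^{(10j+(d+1))10^i-1}\frac{b-((9j+d)10^i+10^{p-2}-1)}{b+1-10^{p-1}}\\ &+\sum_{j=10^{p-2}-1}^{10^{p-1}-1}\ \sum_{a=\max(10^{p+i-1},(10j+(d+1))10^i)}^{\min(10^{p+i}-1,(10(j+1)+d)10^i-1)}\frac{10^i(j+1)-10^{p-2}}{a+1-10^{p-1}}\Big)+ r_{(n,d,p)}\Big), \end{align*} where, if the $p$-th digit of $n$ is $d$, \begin{align*} r_{(n,d,p)}=&\sum_{j=10^{p-2}}^{l}\ \sum_{b=(10j+d)10^{k+1}}^{\min(n,(10j+(d+1))10^{k+1}-1)}\frac{b-((9j+d)10^{k+1}+10^{p-2}-1)}{b+1-10^{p-1}}\\ &+\sum_{j=10^{p-2}-1}^{l-1}\ \sum_{a=\max(10^{p+k},(10j+(d+1))10^{k+1})}^{(10(j+1)+d)10^{k+1}-1}\frac{10^{k+1}(j+1)-10^{p-2}}{a+1-10^{p-1}}, \end{align*} and, if the $p$-th digit of $n$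 is different from $d$, \begin{align*} r_{(n,d,p)}=&\sum_{j=10^{p-2}}^{l}\ \sum_{b=(10j+d)10^{k+1}}^{(10j+(d+1))10^{k+1}-1}\frac{b-((9j+d)10^{k+1}+10^{p-2}-1)}{b+1-10^{p-1}}\\ &+\sum_{j=10^{p-2}-1}^{l}\ \sum_{a=\max(10^{p+k},(10j+(d+1))10^{k+1})}^{\min(n,(10(j+1)+d)10^{k+1}-1)}\frac{10^{k+1}(j+1)-10^{p-2}}{a+1-10^{p-1}}. \end{align*}
   Context: For an integer $x\ge 10^{p-1}$ (so $x$ has at least $p$ decimal digits), the ''$p$-th digit of $x$'' is the $p$-th digit of its decimal expansion counted from the left (most significant digit first). For integers $p\ge2$, $d\in\{0,\dots,9\}$ and $m\ge 10^{p-1}$, let $N_d(m)$ be the number of integers $x$ with $10^{p-1}\le x\le m$ whose $p$-th digit is $d$. For $n\ge 10^{p-1}$ the model is the two-stage random experiment: first choose $m$ uniformly at random in $\{10^{p-1},\dots,n\}$, then choose $x$ uniformly at random in $\{10^{p-1},\dots,m\}$. $P_{(d,n,p)}$ denotes the probability that the $p$-th digit of $x$ is $d$, i.e. $$P_{(d,n,p)}=\frac{1}{n+1-10^{p-1}}\sum_{m=10^{p-1}}^{n}\frac{N_d(m)}{m+1-10^{p-1}}.$$ Sums whose upper index is smaller than the lower index (e.g. $\sum_{i=0}^{-1}$) are zero. *)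

From mathcomp Require Import all_boot all_order all_algebra.
Set Implicit Arguments. Unset Strict Implicit. Unset Printing Implicit Defensive.
Import Order.TTheory GRing.Theory Num.Theory.
Local Open Scope ring_scope.

(* p-th decimal digit of x counted from the left (x has trunc_log 10 x + 1
   decimal digits when x >= 1). Meaningful for x >= 10^(p-1). *)
Definition pth_digit (p x : nat) : nat :=
  (x %/ 10 ^ (trunc_log 10 x + 1 - p)) %% 10.

Definition Nd (p d m : nat) : nat :=
  count (fun x => pth_digit p x == d) (iota (10 ^ (p - 1)) (m.+1 - 10 ^ (p - 1))).

Definition Prob (d n p : nat) : rat :=
  ((n.+1 - 10 ^ (p - 1))%N%:R)^-1 *
  \sum_(10 ^ (p - 1) <= m < n.+1) ((Nd p d m)%:R / (m.+1 - 10 ^ (p - 1))%N%:R).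

Definition sumZ (a b : int) (F : int -> rat) : rat :=
  if a <= b then \sum_(i < absz (b - a + 1)) F (a + i%:Z) else 0.

(* 10^z for an integer exponent z (only used with z >= 0). *)
Definition p10 (z : int) : int := (10 : int) ^ z.

Definition fracB (p d : nat) (e j b : int) : rat :=
  (b - ((9 * j + d%:Z) * p10 e + p10 (p%:Z - 2) - 1))%:~R /
  (b + 1 - p10 (p%:Z - 1))%:~R.

Definition fracA (p : nat) (e j a : int) : rat :=
  (p10 e * (j + 1) - p10 (p%:Z - 2))%:~R / (a + 1 - p10 (p%:Z - 1))%:~R.

Definition r_term (n d p : nat) (k l : int) : rat :=
  if pth_digit p n == d then
    sumZ (p10 (p%:Z - 2)) l (fun j =>
      sumZ ((10 * j + d%:Z) * p10 (k + 1))
           (Num.min n%:Z ((10 * j + (d%:Z + 1)) * p10 (k + 1) - 1))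
           (fun b => fracB p d (k + 1) j b))
    + sumZ (p10 (p%:Z - 2) - 1) (l - 1) (fun j =>
      sumZ (Num.max (p10 (p%:Z + k)) ((10 * j + (d%:Z + 1)) * p10 (k + 1)))
           ((10 * (j + 1) + d%:Z) * p10 (k + 1) - 1)
           (fun a => fracA p (k + 1) j a))
  else
    sumZ (p10 (p%:Z - 2)) l (fun j =>
      sumZ ((10 * j + d%:Z) * p10 (k + 1))
           ((10 * j + (d%:Z + 1)) * p10 (k + 1) - 1)
           (fun b => fracB p d (k + 1) j b))
    + sumZ (p10 (p%:Z - 2) - 1) l (fun j =>
      sumZ (Num.max (p10 (p%:Z + k)) ((10 * j + (d%:Z + 1)) * p10 (k + 1)))
           (Num.min n%:Z ((10 * (j + 1) + d%:Z) * p10 (k + 1) - 1))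
           (fun a => fracA p (k + 1) j a)).

From mathcomp Require Import all_boot all_order all_algebra zify.
Import Order.TTheory GRing.Theory Num.Theory.
Local Open Scope ring_scope.
Set Implicit Arguments.
Unset Strict Implicit.
Unset Printing Implicit Defensive.

(* Write m = q 10^e + s with s < 10^e and 10^(p-1) <= q < 10^p: m has p + e
   digits (e = dexp p m), its p-th digit is q mod 10, and q lies in the block
   [10j + d, 10j + d + 10) with j = dblock d q = (q - d) div 10.  The numbers with
   fewer digits contribute 10^(p-2) (10^e - 1) to N_d(m) and each block below q
   contributes 10^e, so
     N_d(m) = 10^e j - 10^(p-2) + (s + 1 if q mod 10 = d, and 10^e otherwise),
   which is the numerator of the b-summand with i = e and this j when the p-th
   digit of m is d, and of the a-summand otherwise.  Hence, once the sums are
   exchanged to run over m, each m in [10^(p-1), n] is hit by exactly one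
   summand on the right-hand side (i = e <= k in the main sum, e = k + 1 in r),
   and that summand is N_d(m) / (m + 1 - 10^(p-1)). *)

Lemma eq_sumZ a b (f g : int -> rat) :
  (forall x, a <= x <= b -> f x = g x) -> sumZ a b f = sumZ a b g.
Proof.
move=> fg; rewrite /sumZ; case: ifP => // leab.
by apply: eq_bigr => i _; apply: fg; have := ltn_ord i; lia.
Qed.

Lemma sumZ_pick a b (c : pred int) (f : int -> rat) j0 :
  (forall j, a <= j <= b -> c j -> j = j0) ->
  sumZ a b (fun j => if c j then f j else 0) =
  if (a <= j0 <= b) && c j0 then f j0 else 0.
Proof.
move=> uniq_j0; rewrite /sumZ; case: ifP => leab; last first.
  by case: ifP => //; lia.
case: ifP => [/andP[j0_ab cj0] | nj0].
  have j0_lt : (absz (j0 - a)%R < absz (b - a + 1)%R)%N by lia.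
  rewrite (bigD1 (Ordinal j0_lt)) //= big1 ?addr0.
    by rewrite (_ : a + _ = j0) ?cj0 //; lia.
  move=> i /eqP i_neq; case: ifP => // cai; exfalso; apply: i_neq.
  apply: val_inj => /=; have := uniq_j0 _ _ cai; have := ltn_ord i; lia.
apply: big1 => i _; case: ifP => // cai.
have ai_j0 : a + i%:Z = j0 by apply: uniq_j0 cai; have := ltn_ord i; lia.
by move: nj0; rewrite -ai_j0 cai andbT; have := ltn_ord i; lia.
Qed.

Lemma sumZ_window a b (f : int -> rat) (lo hi : nat) :
  lo%:Z <= a -> b < hi%:Z ->
  sumZ a b f = \sum_(lo <= m < hi) (if a <= m%:Z <= b then f m%:Z else 0).
Proof.
case: a => [a|//] lo_a; rewrite /sumZ; case: ifP => leab; last first.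
  by move=> _; rewrite big1 // => m _; case: ifP => //; lia.
case: b leab => [b|//] leab b_hi.
rewrite (big_cat_nat (n := a)) /=; [|lia|lia].
rewrite (big_cat_nat (m := a) (n := b.+1)) /=; [|lia|lia].
rewrite [X in _ = X + _]big1_seq ?add0r => [|m /andP[_]]; last first.
  by rewrite mem_index_iota; case: ifP => //; lia.
rewrite [X in _ = _ + X]big1_seq ?addr0 => [|m /andP[_]]; last first.
  by rewrite mem_index_iota; case: ifP => //; lia.
rewrite [in RHS](_ : a = 0 + a)%N // big_addn big_mkord.
rewrite (_ : b.+1 - a = absz (b%:Z - a%:Z + 1)%R)%N; last lia.
apply: eq_bigr => i _; rewrite ifT; last by have := ltn_ord i; lia.
by rewrite PoszD addrC.
Qed.

Lemma exchange_sumZ a b (lo hi : nat) (F : int -> nat -> rat) :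
  sumZ a b (fun j => \sum_(lo <= m < hi) F j m) =
  \sum_(lo <= m < hi) sumZ a b (fun j => F j m).
Proof. by rewrite /sumZ; case: ifP => _; [rewrite exchange_big | rewrite big1]. Qed.

Lemma sumZ_sumZ_window a b (A B : int -> int) (f : int -> int -> rat) (lo hi : nat) :
  (forall j, a <= j <= b -> lo%:Z <= A j /\ B j < hi%:Z) ->
  sumZ a b (fun j => sumZ (A j) (B j) (f j)) =
  \sum_(lo <= m < hi) sumZ a b (fun j => if A j <= m%:Z <= B j then f j m%:Z else 0).
Proof.
move=> AB_lohi; rewrite -exchange_sumZ; apply: eq_sumZ => j /AB_lohi[lo_A B_hi].
exact: sumZ_window.
Qed.

Lemma p10_nat (n : nat) : p10 n = (10 ^ n)%N%:Z.
Proof. by rewrite /p10 -exprnP; elim: n => // n IH; rewrite exprS IH expnS PoszM. Qed.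

Lemma lez_divRL10 (a : int) (m e : nat) :
  (a <= (m %/ 10 ^ e)%N%:Z) = (a * (10 ^ e)%N%:Z <= m%:Z).
Proof.
have X_gt0 : (0 < 10 ^ e)%N by rewrite expn_gt0.
case: a => a; first by rewrite -PoszM !lez_nat leq_divRL.
rewrite NegzE mulNr -PoszM; move: (m %/ _)%N (_ * _)%N => u v.
by apply/idP/idP; lia.
Qed.

Lemma ltz_divLR10 (b : int) (m e : nat) :
  ((m %/ 10 ^ e)%N%:Z < b) = (m%:Z <= b * (10 ^ e)%N%:Z - 1).
Proof.
rewrite ltNge lez_divRL10; move: (b * _) => v.
by apply/idP/idP; lia.
Qed.

Section Digits.

Variable p : nat.
Hypothesis p_ge2 : (2 <= p)%N.

Lemma p10_pred : p10 (p%:Z - 1) = (10 ^ (p - 1))%N%:Z.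
Proof. by rewrite (_ : p%:Z - 1 = (p - 1)%N%:Z) ?p10_nat //; lia. Qed.

Lemma p10_pred2 : p10 (p%:Z - 2) = (10 ^ (p - 2))%N%:Z.
Proof. by rewrite (_ : p%:Z - 2 = (p - 2)%N%:Z) ?p10_nat //; lia. Qed.

Lemma p10_add (i : nat) : p10 (p%:Z + i%:Z) = (10 ^ p)%N%:Z * (10 ^ i)%N%:Z.
Proof. by rewrite -PoszD p10_nat expnD PoszM. Qed.

Lemma p10_add_pred (i : nat) :
  p10 (p%:Z + i%:Z - 1) = (10 ^ (p - 1))%N%:Z * (10 ^ i)%N%:Z.
Proof. by rewrite (_ : _ - 1 = (p - 1 + i)%N%:Z) ?p10_nat ?expnD ?PoszM //; lia. Qed.

Lemma exp10_pred : (10 ^ (p - 1) = 10 * 10 ^ (p - 2))%N.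
Proof. by rewrite -expnS; congr (_ ^ _)%N; lia. Qed.

Lemma exp10_p : (10 ^ p = 100 * 10 ^ (p - 2))%N.
Proof. by rewrite (_ : 100 = 10 ^ 2)%N // -expnD; congr (_ ^ _)%N; lia. Qed.

Definition dexp (m : nat) : nat := (trunc_log 10 m + 1 - p)%N.

Lemma dexp_lead (e q s : nat) : (s < 10 ^ e)%N -> (10 ^ (p - 1) <= q < 10 ^ p)%N ->
  dexp (q * 10 ^ e + s) = e.
Proof.
move=> s_lt /andP[q_ge q_lt]; rewrite /dexp.
have -> : trunc_log 10 (q * 10 ^ e + s) = (p - 1 + e)%N.
  apply: trunc_log_eq => //; rewrite (_ : (p - 1 + e).+1 = p + e)%N; last lia.
  rewrite !expnD; apply/andP; split.
    by apply: leq_trans (leq_addr _ _); rewrite leq_mul2r q_ge orbT.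
  apply: leq_trans (_ : q.+1 * 10 ^ e <= _)%N; first by rewrite mulSnr ltn_add2l.
  by rewrite leq_mul2r q_lt orbT.
lia.
Qed.

Lemma dexp_bounds (m : nat) : (10 ^ (p - 1) <= m)%N ->
  (10 ^ (p - 1) <= m %/ 10 ^ dexp m < 10 ^ p)%N.
Proof.
move=> m_ge; have m_gt0 : (0 < m)%N by apply: leq_trans m_ge; rewrite expn_gt0.
have t_ge := trunc_log_max (isT : (1 < 10)%N) m_ge.
have := trunc_log_bounds (isT : (1 < 10)%N) m_gt0; rewrite /dexp.
move: (trunc_log 10 m) t_ge => t t_ge.
rewrite leq_divRL ?ltn_divLR ?expn_gt0 // -!expnD.
by rewrite (_ : p - 1 + _ = t)%N 1?(_ : p + _ = t.+1)%N //; lia.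
Qed.

Lemma dexpP (m e : nat) : (10 ^ (p - 1) <= m)%N ->
  reflect (10 ^ (p - 1) <= m %/ 10 ^ e < 10 ^ p)%N (dexp m == e).
Proof.
move=> m_ge; apply: (iffP eqP) => [<- | q_bounds]; first exact: dexp_bounds.
by rewrite (divn_eq m (10 ^ e)) dexp_lead // ltn_pmod ?expn_gt0.
Qed.

Lemma pth_digit_lead (e q s : nat) : (s < 10 ^ e)%N -> (10 ^ (p - 1) <= q < 10 ^ p)%N ->
  pth_digit p (q * 10 ^ e + s) = (q %% 10)%N.
Proof.
move=> s_lt q_bounds; rewrite /pth_digit -/(dexp _) dexp_lead //.
by rewrite divnMDl ?expn_gt0 // divn_small ?addn0.
Qed.

Lemma leq_dexp (m n : nat) : (m <= n)%N -> (dexp m <= dexp n)%N.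
Proof. by move=> le_mn; rewrite /dexp leq_sub2r // leq_add2r leq_trunc_log. Qed.

Lemma max_exponent_dexp (n : nat) (k : int) : (10 ^ (p - 1) <= n)%N ->
  ((k = -1 /\ (forall i : nat, ~ (10 ^ (i + p) <= n)%N)) \/
   (exists i : nat, k = i%:Z /\ (10 ^ (i + p) <= n)%N /\
      (forall i' : nat, (10 ^ (i' + p) <= n)%N -> (i' <= i)%N))) ->
  k = (dexp n)%:Z - 1.
Proof.
move=> n_ge [[-> no_i] | [i [-> [i_le i_max]]]].
  suff /eqP -> : dexp n == 0%N by [].
  apply/(dexpP _ n_ge); rewrite expn0 divn1 n_ge ltnNge /=.
  by apply/negP => /(no_i 0%N).
suff /eqP -> : dexp n == i.+1 by lia.
apply/(dexpP _ n_ge); rewrite leq_divRL ?ltn_divLR ?expn_gt0 // -!expnD.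
rewrite (_ : p - 1 + i.+1 = i + p)%N ?i_le /=; last lia.
rewrite ltnNge (_ : p + i.+1 = i.+1 + p)%N; last lia.
by apply/negP => /i_max; lia.
Qed.

End Digits.

Section Counting.

Variables p d : nat.
Hypotheses (p_ge2 : (2 <= p)%N) (d_le9 : (d <= 9)%N).

Definition dblock (q : nat) : nat := ((q - d) %/ 10)%N.

Definition Nd_formula (e q s : nat) : int :=
  (10 ^ e * dblock q)%N%:Z + (if q %% 10 == d then s.+1 else 10 ^ e)%N%:Z
  - (10 ^ (p - 2))%N%:Z.

Definition Nd_formula_at (m : nat) : int :=
  Nd_formula (dexp p m) (m %/ 10 ^ dexp p m) (m %% 10 ^ dexp p m).

Lemma Nd_formula_at_lead (e q s : nat) :
  (s < 10 ^ e)%N -> (10 ^ (p - 1) <= q < 10 ^ p)%N ->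
  Nd_formula_at (q * 10 ^ e + s) = Nd_formula e q s.
Proof.
move=> s_lt q_bounds; rewrite /Nd_formula_at (dexp_lead p_ge2) //.
by rewrite divnMDl ?expn_gt0 // divn_small // addn0 modnMDl modn_small.
Qed.

Lemma Nd_succ (m : nat) : (10 ^ (p - 1) <= m)%N ->
  Nd p d m.+1 = (Nd p d m + (pth_digit p m.+1 == d))%N.
Proof.
move=> m_ge; rewrite /Nd (_ : m.+2 - _ = (m.+1 - 10 ^ (p - 1)) + 1)%N; last lia.
rewrite iotaD count_cat /= (_ : 10 ^ (p - 1) + _ = m.+1)%N; last lia.
by rewrite addn0.
Qed.

Lemma Nd_formula_at_succ (m : nat) : (10 ^ (p - 1) <= m)%N ->
  Nd_formula_at m.+1 = Nd_formula_at m + (pth_digit p m.+1 == d)%:Z.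
Proof.
move=> m_ge; have /andP[q_ge q_lt] := dexp_bounds p_ge2 m_ge.
have X_gt0 : (0 < 10 ^ dexp p m)%N by rewrite expn_gt0.
have := ltn_pmod m X_gt0; have := divn_eq m (10 ^ dexp p m).
move: q_ge q_lt; move: (dexp p m) (m %/ _)%N (m %% _)%N X_gt0.
move=> e q s X_gt0 q_ge q_lt -> s_lt; rewrite [in RHS]Nd_formula_at_lead ?q_ge //.
have P2_gt0 : (0 < 10 ^ (p - 2))%N by rewrite expn_gt0.
have exp_pred := exp10_pred p_ge2; have exp_p := exp10_p p_ge2.
have [s1_lt | s1_ge] := ltnP s.+1 (10 ^ e).
  rewrite -addnS Nd_formula_at_lead ?(pth_digit_lead p_ge2) ?exp_pred ?exp_p //; try lia.
  by rewrite /Nd_formula; case: eqP => _; lia.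
have s1_eq : s.+1 = (10 ^ e)%N by lia.
have [q1_lt | q1_ge] := ltnP q.+1 (10 ^ p).
  rewrite -addnS s1_eq -mulSnr -[(q.+1 * _)%N]addn0.
  rewrite Nd_formula_at_lead ?(pth_digit_lead p_ge2) ?exp_pred ?exp_p //; try lia.
  have dblockS : dblock q.+1 = (dblock q + (q.+1 %% 10 == d))%N by rewrite /dblock; lia.
  by rewrite /Nd_formula dblockS mulnDr; case: eqP; case: eqP; lia.
rewrite -addnS s1_eq -mulSnr (_ : q.+1 = 10 ^ (p - 1) * 10)%N; last lia.
rewrite -mulnA -expnS -[(10 ^ (p - 1) * _)%N]addn0.
rewrite Nd_formula_at_lead ?(pth_digit_lead p_ge2) ?exp_pred ?exp_p //; try lia.
have dblock_L : dblock (10 * 10 ^ (p - 2)) = (10 ^ (p - 2) - (0 < d))%N by rewrite /dblock; lia.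
have dblock_q : dblock q = (10 * 10 ^ (p - 2) - 1)%N by rewrite /dblock; lia.
rewrite /Nd_formula dblock_L dblock_q expnS !mulnBr.
have XP2_ge : (10 ^ e <= 10 ^ e * 10 ^ (p - 2))%N by rewrite leq_pmulr.
by case: d d_le9 => [|d'] _ /=; rewrite ?muln0 ?muln1; case: eqP; case: eqP; lia.
Qed.

Lemma Nd_eq_formula (m : nat) : (10 ^ (p - 1) <= m)%N -> (Nd p d m)%:Z = Nd_formula_at m.
Proof.
move=> m_ge; rewrite -(subnKC m_ge); elim: (m - _)%N => [|k IH]; last first.
  by rewrite addnS Nd_succ ?leq_addr // PoszD IH Nd_formula_at_succ ?leq_addr.
have L_bounds : (10 ^ (p - 1) <= 10 ^ (p - 1) < 10 ^ p)%N by rewrite leqnn ltn_exp2l //; lia.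
have s_lt : (0 < 10 ^ 0)%N by [].
have := Nd_formula_at_lead s_lt L_bounds; have := pth_digit_lead p_ge2 s_lt L_bounds.
rewrite expn0 muln1 addn0 /Nd (_ : _.+1 - _ = 1)%N /=; last lia.
move=> -> ->; have exp_pred := exp10_pred p_ge2; rewrite /Nd_formula /dblock.
rewrite exp_pred (_ : (10 * _ - d) %/ 10 = 10 ^ (p - 2) - (0 < d))%N; last lia.
by case: eqP; lia.
Qed.

Definition Nd_ratio (m : nat) : rat := (Nd p d m)%:R / (m.+1 - 10 ^ (p - 1))%N%:R.

Lemma Nd_ratio_frac (e m : nat) : (10 ^ (p - 1) <= m)%N -> dexp p m = e ->
  let q := (m %/ 10 ^ e)%N in let j := (dblock q)%:Z in
  Nd_ratio m = if (q %% 10 == d)%N then fracB p d e j m else fracA p e j m.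
Proof.
move=> m_ge m_e q j; rewrite /Nd_ratio !pmulrn Nd_eq_formula // /Nd_formula_at m_e -/q.
have := divn_eq m (10 ^ e); rewrite -/q /Nd_formula /fracB /fracA /j /dblock.
rewrite p10_nat (p10_pred p_ge2) (p10_pred2 p_ge2); have exp_pred := exp10_pred p_ge2; clearbody q.
move: (m %% 10 ^ e)%N => s; move: (10 ^ e)%N => X m_eq.
case: eqP => q_d; congr (_ / _); congr intr; try lia.
by rewrite (_ : q = 10 * ((q - d) %/ 10) + d)%N in m_eq; lia.
Qed.

Lemma block_terms_at (e m : nat) (ja jb ja' jb' : int) (inB inA : pred int) :
  let q := (m %/ 10 ^ e)%N in let J := (dblock q)%:Z in
  (10 ^ (p - 1) <= m)%N ->
  (10 ^ (p - 2))%N%:Z <= ja -> jb < (10 ^ (p - 1))%N%:Z ->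
  (forall j, ja <= j <= jb -> inB j = (q%:Z == 10 * j + d%:Z)) ->
  (forall j, ja' <= j <= jb' -> inA j =
     [&& (10 ^ (p - 1) <= q < 10 ^ p)%N & 10 * j + d%:Z < q%:Z < 10 * j + d%:Z + 10]) ->
  (dexp p m = e -> if (q %% 10 == d)%N then ja <= J <= jb else ja' <= J <= jb') ->
  sumZ ja jb (fun j => if inB j then fracB p d e j m else 0)
  + sumZ ja' jb' (fun j => if inA j then fracA p e j m else 0)
  = if dexp p m == e then Nd_ratio m else 0.
Proof.
move=> q J m_ge ja_ge jb_lt inBE inAE J_range.
have q_def : q = (m %/ 10 ^ e)%N by []; clearbody q.
have exp_pred := exp10_pred p_ge2; have exp_p := exp10_p p_ge2.
have P2_gt0 : (0 < 10 ^ (p - 2))%N by rewrite expn_gt0.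
rewrite (@sumZ_pick _ _ _ _ J) => [|j j_in]; last by rewrite inBE // /J /dblock; lia.
rewrite (@sumZ_pick _ _ _ _ J) => [|j j_in]; last by rewrite inAE // /J /dblock; lia.
have B_cond : ((ja <= J <= jb) && inB J) = (ja <= J <= jb) && (q %% 10 == d)%N.
  by case: (boolP (ja <= J <= jb)) => //= J_in; rewrite inBE // /J /dblock; lia.
have A_cond : ((ja' <= J <= jb') && inA J) =
    [&& ja' <= J <= jb', (10 ^ (p - 1) <= q < 10 ^ p)%N & (q %% 10 != d)%N].
  by case: (boolP (ja' <= J <= jb')) => //= J_in; rewrite inAE // /J /dblock; lia.
rewrite B_cond A_cond; case: (boolP (dexp p m == e)) => [/eqP m_e | m_ne].
  have q_bounds : (10 ^ (p - 1) <= q < 10 ^ p)%N by rewrite q_def -m_e (dexp_bounds p_ge2).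
  rewrite (Nd_ratio_frac m_ge m_e) -q_def -/J q_bounds; move: (J_range m_e).
  by case: eqP => _ ->; rewrite /= ?andbT ?andbF ?addr0 ?add0r.
have q_out : ~~ (10 ^ (p - 1) <= q < 10 ^ p)%N.
  by apply: contra m_ne; rewrite q_def => /(dexpP p_ge2) ->.
rewrite (negbTE q_out) andbF addr0 ifF //; apply/negbTE.
rewrite /J /dblock; clear -q_out ja_ge jb_lt exp_pred exp_p P2_gt0; lia.
Qed.

Lemma complete_block_sum (i n : nat) : (10 ^ p * 10 ^ i <= n)%N ->
  sumZ (p10 (p%:Z - 2)) (p10 (p%:Z - 1) - 1) (fun j =>
    sumZ ((10 * j + d%:Z) * p10 i) ((10 * j + (d%:Z + 1)) * p10 i - 1)
         (fun b => fracB p d i j b))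
  + sumZ (p10 (p%:Z - 2) - 1) (p10 (p%:Z - 1) - 1) (fun j =>
    sumZ (Num.max (p10 (p%:Z + i - 1)) ((10 * j + (d%:Z + 1)) * p10 i))
         (Num.min (p10 (p%:Z + i) - 1) ((10 * (j + 1) + d%:Z) * p10 i - 1))
         (fun a => fracA p i j a))
  = \sum_(10 ^ (p - 1) <= m < n.+1) (if dexp p m == i then Nd_ratio m else 0).
Proof.
move=> n_ge; rewrite p10_nat (p10_pred p_ge2) (p10_pred2 p_ge2) (p10_add_pred p_ge2) p10_add.
have exp_pred := exp10_pred p_ge2; have exp_p := exp10_p p_ge2.
have P2_gt0 : (0 < 10 ^ (p - 2))%N by rewrite expn_gt0.
have X_gt0 : (0 < 10 ^ i)%N by rewrite expn_gt0.
rewrite exp_p in n_ge.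
rewrite (@sumZ_sumZ_window _ _ _ _ _ (10 ^ (p - 1)) n.+1); last first.
  by move=> j j_in; split; nia.
rewrite (@sumZ_sumZ_window _ _ _ _ _ (10 ^ (p - 1)) n.+1); last first.
  by move=> j j_in; rewrite le_max gt_min; split; apply/orP; left; nia.
rewrite -big_split; apply: eq_big_nat => m /andP[m_ge _].
apply: block_terms_at => //; try lia.
- by move=> j _; rewrite -lez_divRL10 -ltz_divLR10; lia.
- by move=> j _; rewrite ge_max le_min -!lez_divRL10 -!ltz_divLR10; lia.
- move=> m_i; have := dexp_bounds p_ge2 m_ge; rewrite m_i /dblock.
  by case: eqP; lia.
Qed.

Lemma r_term_block_sum (n : nat) : (10 ^ (p - 1) <= n)%N ->
  let K := dexp p n in
  r_term n d p (K%:Z - 1) (dblock (n %/ 10 ^ K))%:Z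
  = \sum_(10 ^ (p - 1) <= m < n.+1) (if dexp p m == K then Nd_ratio m else 0).
Proof.
move=> n_ge K; rewrite /r_term (_ : K%:Z - 1 + 1 = K); last lia.
rewrite (_ : p%:Z + (K%:Z - 1) = p%:Z + K - 1); last lia.
rewrite p10_nat (p10_pred2 p_ge2) (p10_add_pred p_ge2) /pth_digit -/(dexp p n) -/K.
have := dexp_bounds p_ge2 n_ge; rewrite -/K.
have exp_pred := exp10_pred p_ge2; have exp_p := exp10_p p_ge2.
have P2_gt0 : (0 < 10 ^ (p - 2))%N by rewrite expn_gt0.
have X_gt0 : (0 < 10 ^ K)%N by rewrite expn_gt0.
have X_ge1 : 1 <= (10 ^ K)%N%:Z by rewrite lez_nat.
have mulX_le_n a : (a * (10 ^ K)%N%:Z <= n%:Z) = (a <= (n %/ 10 ^ K)%N%:Z).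
  by rewrite lez_divRL10.
have mulX_ge a : (10 ^ (p - 1))%N%:Z <= a -> (10 ^ (p - 1))%N%:Z <= a * (10 ^ K)%N%:Z.
  by move=> L_a; rewrite (le_trans L_a) // ler_peMr //; lia.
move=> qn_bounds; clearbody K; rewrite /dblock.
case: eqP => qn_d; rewrite (@sumZ_sumZ_window _ _ _ _ _ (10 ^ (p - 1)) n.+1)
  ?(@sumZ_sumZ_window _ _ _ _ _ (10 ^ (p - 1)) n.+1).
all: try by move=> j j_in;
  have := mulX_ge (10 * j + d%:Z); have := mulX_ge (10 ^ (p - 1))%N;
  have := mulX_le_n (10 * (j + 1) + d%:Z); have := mulX_le_n (10 * j + (d%:Z + 1));
  rewrite ?le_max ?gt_min; lia.
all: rewrite -big_split; apply: eq_big_nat => m /andP[m_ge m_lt].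
all: have m_le : m%:Z <= n%:Z by lia.
all: have q_le : (m %/ 10 ^ K <= n %/ 10 ^ K)%N by rewrite leq_div2r //; lia.
all: apply: block_terms_at => //.
all: try by move=> j _; rewrite ?ge_max ?le_min ?m_le -?lez_divRL10 -?ltz_divLR10; lia.
all: try by move=> m_K; have := dexp_bounds p_ge2 m_ge; rewrite m_K /dblock; case: eqP; lia.
all: lia.
Qed.

Lemma floor_dblock (n K : nat) : (10 ^ (p - 1) <= n %/ 10 ^ K)%N ->
  Num.floor ((n%:Z - (p10 (p%:Z - 1) + d%:Z) * p10 K)%:~R / (p10 (K%:Z + 1))%:~R : rat)
  + p10 (p%:Z - 2) = (dblock (n %/ 10 ^ K))%:Z.
Proof.
move=> qn_ge; rewrite (_ : K%:Z + 1 = K.+1); last lia.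
rewrite !p10_nat (p10_pred p_ge2) (p10_pred2 p_ge2) expnSr PoszM.
have exp_pred := exp10_pred p_ge2; have X_gt0 : (0 < 10 ^ K)%N by rewrite expn_gt0.
have D_gt0 : (0 : rat) < ((10 ^ K)%N%:Z * 10)%:~R by rewrite ltr0z; lia.
rewrite (@floor_def _ _ ((dblock (n %/ 10 ^ K))%:Z - (10 ^ (p - 2))%N%:Z)); first lia.
rewrite ler_pdivlMr // ltr_pdivrMr // -!intrM ler_int ltr_int.
have := lez_divRL10 (10 * (dblock (n %/ 10 ^ K))%:Z + d%:Z) n K.
have := ltz_divLR10 (10 * (dblock (n %/ 10 ^ K))%:Z + d%:Z + 10) n K.
by rewrite /dblock; lia.
Qed.

End Counting.

Theorem proposition1 (p d n : nat) (k : int) :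
  (2 <= p)%N -> (d <= 9)%N -> (10 ^ (p - 1) <= n)%N ->
  (* k = max { i in N | 10^(i+p) <= n }, and k = -1 if this set is empty *)
  ((k = -1 /\ (forall i : nat, ~ (10 ^ (i + p) <= n)%N)) \/
   (exists i : nat, k = i%:Z /\ (10 ^ (i + p) <= n)%N /\
      (forall i' : nat, (10 ^ (i' + p) <= n)%N -> (i' <= i)%N))) ->
  let l : int :=
    Num.floor ((n%:Z - (p10 (p%:Z - 1) + d%:Z) * p10 (k + 1))%:~R
               / (p10 (k + 2))%:~R : rat) + p10 (p%:Z - 2) in
  Prob d n p =
  ((n.+1 - 10 ^ (p - 1))%N%:R)^-1 *
  (sumZ 0 k (fun i =>
      sumZ (p10 (p%:Z - 2)) (p10 (p%:Z - 1) - 1) (fun j =>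
        sumZ ((10 * j + d%:Z) * p10 i) ((10 * j + (d%:Z + 1)) * p10 i - 1)
             (fun b => fracB p d i j b))
    + sumZ (p10 (p%:Z - 2) - 1) (p10 (p%:Z - 1) - 1) (fun j =>
        sumZ (Num.max (p10 (p%:Z + i - 1)) ((10 * j + (d%:Z + 1)) * p10 i))
             (Num.min (p10 (p%:Z + i) - 1) ((10 * (j + 1) + d%:Z) * p10 i - 1))
             (fun a => fracA p i j a)))
   + r_term n d p k l).
Proof.
move=> p_ge2 d_le9 n_ge /(max_exponent_dexp p_ge2 n_ge) -> l; set K := dexp p n.
have /andP[qn_ge _] := dexp_bounds p_ge2 n_ge; rewrite -/K in qn_ge.
have -> : l = (dblock d (n %/ 10 ^ K))%:Z.
  by rewrite /l (_ : K%:Z - 1 + 1 = K) 1?(_ : K%:Z - 1 + 2 = K%:Z + 1) ?floor_dblock //; lia.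
rewrite r_term_block_sum // /Prob; congr (_ * _).
rewrite (eq_sumZ (g := fun i => \sum_(10 ^ (p - 1) <= m < n.+1)
                   (if (dexp p m)%:Z == i then Nd_ratio p d m else 0))); last first.
  move=> [i|//] i_in; rewrite (complete_block_sum p_ge2 d_le9 (n := n)).
    by apply: eq_bigr => m _; rewrite eqz_nat.
  rewrite -expnD; apply: leq_trans (_ : 10 ^ (p - 1 + K) <= n)%N.
    by rewrite leq_exp2l //; lia.
  by rewrite expnD -leq_divRL ?expn_gt0.
rewrite exchange_sumZ -big_split; apply: eq_big_nat => m /andP[m_ge le_mn].
rewrite (@sumZ_pick _ _ _ _ (dexp p m)) => [|i _ /eqP //].
have : (dexp p m <= K)%N by apply: leq_dexp; lia.
rewrite eqxx andbT -/K -/(Nd_ratio p d m) leq_eqVlt => /orP[/eqP -> | lt_mK].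
  by rewrite eqxx ifF /= ?add0r //; lia.
by rewrite ifT ?ifF /= ?addr0 //; lia.
Qed.
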